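(* Let $\mathcal{K}\subseteq\mathbb{R}\cup\{\pm\infty\}$ have nonzero Lebesgue measure, let $\varpi:\mathcal{K}\to\mathbb{R}_{\geq 0}$ be Lebesgue integrable with only countably many zeros, let $d,n,\rho\in\mathbb{N}$, let $\mathbf{f}\in\mathbb{L}^2_{\varpi}(\mathcal{K};\mathbb{R}^d)$ satisfy $\mathsf{F}^{-1}:=\int_{\mathcal{K}}\varpi(\tau)\mathbf{f}(\tau)\mathbf{f}^\top(\tau)\,d\tau\succ 0$, put $F(\tau)=\mathbf{f}(\tau)\otimes I_n$, and let $U\in\mathbb{R}^{n\times n}$ be symmetric with $U\succ 0$. Let $\mathbf{x}\in\mathbb{L}^2_{\varpi}(\mathcal{K};\mathbb{R}^n)$, $\boldsymbol{\vartheta}=\int_{\mathcal{K}}\varpi F\mathbf{x}\,d\tau$, and let $\Upsilon\in\mathbb{R}^{dn\times\rho n}$, $\mathbf{z}\in\mathbb{R}^{\rho n}$ satisfy $\Upsilon\mathbf{z}=\boldsymbol{\vartheta}$. For symmetric $Y\in\mathbb{R}^{\rho dn\times\rho dn}$ and $X=[X_1\ \cdots\ X_d]\in\mathbb{R}^{n\times\rho dn}$ ($X_i\in\mathbb{R}^{n\times\rho n}$) put $\widehat{X}=\mathrm{Col}_{i=1}^dX_i$ and $W=\int_{\mathcal{K}}\varpi(\tau)(\mathbf{f}^\top(\tau)\otimes I_{\rho n})Y(\mathbf{f}(\tau)\otimes I_{\rho n})\,d\tau$. Then for all such $X,Y$ satisfying $\begin{bmatrix}U&-X\\-X^\top&Y\end{bmatrix}\succeq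 0$, $$\mathbf{z}^\top\big[\Upsilon^\top\widehat{X}+\widehat{X}^\top\Upsilon-W\big]\mathbf{z}\;\leq\;\boldsymbol{\vartheta}^\top(\mathsf{F}\otimes U)\boldsymbol{\vartheta},$$ and equality holds for $\widehat{X}=(\mathsf{F}\otimes U)\Upsilon$ and $Y=X^\top U^{-1}X$ (which satisfy the matrix inequality). Thus the largest lower bound of the form $\mathbf{z}^\top[\Upsilon^\top\widehat{X}+\widehat{X}^\top\Upsilon-W]\mathbf{z}$ for $\int_{\mathcal{K}}\varpi\,\mathbf{x}^\top U\mathbf{x}\,d\tau$ equals the lower bound $\boldsymbol{\vartheta}^\top(\mathsf{F}\otimes U)\boldsymbol{\vartheta}$.
   Context: $\mathbb{L}^2_{\varpi}(\mathcal{K};\mathbb{R}^m)$ is the set of Lebesgue integrable functions $\phi:\mathcal{K}\to\mathbb{R}^m$ with $\int_{\mathcal{K}}\varpi\phi^\top\phi\,d\tau<\infty$. $\mathrm{Col}$ stacks blocks vertically; $\otimes$ is the Kronecker product. *)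

From HB Require Import structures.
From mathcomp Require Import all_boot all_order all_algebra.
From mathcomp Require Import all_classical all_reals all_analysis.
Set Implicit Arguments. Unset Strict Implicit. Unset Printing Implicit Defensive.
Import Order.TTheory GRing.Theory Num.Theory.
Local Open Scope classical_set_scope.
Local Open Scope ring_scope.

(* Index splitting 'I_(m*p) -> 'I_m * 'I_p, row-major: k = i*p + j. *)
Definition kidx (m p : nat) (k : 'I_(m * p)) : 'I_m * 'I_p :=
  enum_val (cast_ord (esym (mxvec_cast m p)) k).

Definition kron (R : pzRingType) (m n p q : nat)
  (A : 'M[R]_(m, n)) (B : 'M[R]_(p, q)) : 'M[R]_(m * p, n * q) :=
  \matrix_(a, b) (A (kidx a).1 (kidx b).1 * B (kidx a).2 (kidx b).2).

Definition kronI (R : pzRingType) (d : nat) (v : 'cV[R]_d) (m : nat)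
  : 'M[R]_(d * m, m) :=
  castmx (erefl, mul1n m) (kron v (1%:M : 'M[R]_m)).

(* Col_{i=1}^d X_i for X = [X_1 ... X_d], X_i : 'M_(n, k) *)
Definition colblocks (R : Type) (n d k : nat) (X : 'M[R]_(n, d * k))
  : 'M[R]_(d * n, k) :=
  \matrix_(a, c) X (kidx a).2 (mxvec_index (kidx a).1 c).

Definition symmx (R : Type) (m : nat) (M : 'M[R]_m) := M^T = M.

Definition psd (R : numDomainType) (m : nat) (M : 'M[R]_m) :=
  symmx M /\ forall v : 'cV[R]_m, 0 <= (v^T *m M *m v) 0 0.

Definition posdef (R : numDomainType) (m : nat) (M : 'M[R]_m) :=
  symmx M /\ forall v : 'cV[R]_m, v != 0 -> 0 < (v^T *m M *m v) 0 0.

Definition mxint (R : realType) (m p : nat) (K : set R) (G : R -> 'M[R]_(m, p))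
  : 'M[R]_(m, p) :=
  \matrix_(i, j) Rintegral lebesgue_measure K (fun t : R => G t i j).

Definition L2w (R : realType) (m : nat) (K : set R) (w : R -> R)
  (x : R -> 'cV[R]_m) :=
  (forall i, measurable_fun K (fun t => x t i 0)) /\
  lebesgue_measure.-integrable K (fun t : R => (w t * ((x t)^T *m x t) 0 0)%:E).

From HB Require Import structures.
From mathcomp Require Import all_boot all_order all_algebra.
From mathcomp Require Import all_classical all_reals all_analysis.
From mathcomp Require Import measurable_realfun lra.
Import Order.TTheory GRing.Theory Num.Theory.
Local Open Scope classical_set_scope.
Local Open Scope ring_scope.
Set Implicit Arguments. Unset Strict Implicit.

(* Fix t, write v := f t and take any u.  Evaluating the semidefinite block
   matrix at c := [(v (x) I_n)^T u; (v (x) I_rho.n) z] gives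
     0 <= u^T (v v^T (x) U) u - 2 u^T (v v^T (x) I) Xhat z
          + z^T (v^T (x) I) Y (v (x) I) z,
   and every term is linear in v v^T.  Weighting by w t and integrating replaces
   v v^T by F^-1 and the last term by z^T W z; the choice u := (F (x) I) theta
   together with Ups z = theta turns this into the bound.  For
   Xhat = (F (x) U) Ups and Y = X^T U^-1 X the block matrix is semidefinite by
   the Schur complement, and W = Xhat^T (F^-1 (x) U^-1) Xhat makes both sides
   equal. *)

Lemma kidxK m p (i : 'I_m) (j : 'I_p) : kidx (mxvec_index i j) = (i, j).
Proof. by rewrite /kidx /mxvec_index cast_ordK enum_rankK. Qed.

Lemma kidx_inj m p : injective (@kidx m p).
Proof.
move=> a b; case/mxvec_indexP: a => i j; case/mxvec_indexP: b => i' j'.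
by rewrite !kidxK => -[-> ->].
Qed.

Lemma kidx_mul1n m (b : 'I_m) : kidx (cast_ord (esym (mul1n m)) b) = (ord0, b).
Proof.
rewrite /kidx (enum_val_nth (ord0, b)) enumT unlock /= /prod_enum.
have -> : enum 'I_1 = [:: ord0] by apply: (inj_map val_inj); rewrite val_enum_ord.
rewrite /= cats0 (nth_map b) ?size_enum_ord //.
by congr pair; apply: val_inj; rewrite /= nth_enum_ord.
Qed.

Lemma sum_mxvec_index (V : nmodType) m p (F : 'I_(m * p) -> V) :
  \sum_k F k = \sum_i \sum_j F (mxvec_index i j).
Proof.
rewrite pair_big /= (reindex (uncurry (@mxvec_index m p))) /=.
  by apply: eq_bigr => -[i j].
exact: curry_mxvec_bij.
Qed.

Lemma sum_delta (R : pzSemiRingType) n (j : 'I_n) (F : 'I_n -> R) :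
  \sum_i (i == j)%:R * F i = F j.
Proof.
by rewrite (bigD1 j) //= eqxx mul1r big1 ?addr0 // => i /negbTE ->; rewrite mul0r.
Qed.

Section Kronecker.
Variable R : comPzRingType.

Lemma kron_mul m n p q r s (A : 'M[R]_(m, n)) (B : 'M[R]_(p, q))
    (C : 'M[R]_(n, r)) (D : 'M[R]_(q, s)) :
  kron A B *m kron C D = kron (A *m C) (B *m D).
Proof.
apply/matrixP => a b; rewrite !mxE sum_mxvec_index big_distrl.
apply: eq_bigr => i _; rewrite big_distrr; apply: eq_bigr => j _.
by rewrite !mxE !kidxK /= mulrACA.
Qed.

Lemma tr_kron m n p q (A : 'M[R]_(m, n)) (B : 'M[R]_(p, q)) :
  (kron A B)^T = kron A^T B^T.
Proof. by apply/matrixP => a b; rewrite !mxE. Qed.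

Lemma kron1mx m p : kron (1%:M : 'M[R]_m) (1%:M : 'M[R]_p) = 1%:M.
Proof.
apply/matrixP => a b; rewrite !mxE -natrM -(inj_eq (@kidx_inj m p)).
by case: (kidx a) => i j; case: (kidx b) => i' j'; rewrite xpair_eqE mulnb.
Qed.

Lemma kron_linearl m n p q (C : 'M[R]_(p, q)) :
  linear (fun A : 'M[R]_(m, n) => kron A C).
Proof. by move=> c A B; apply/matrixP => a b; rewrite !mxE mulrDl mulrA. Qed.

Lemma kronI_mxvecE d (v : 'cV[R]_d) m i a b :
  kronI v m (mxvec_index i a) b = (a == b)%:R * v i 0.
Proof.
rewrite /kronI castmxE /= cast_ord_id /kron mxE kidx_mul1n kidxK /= mxE.
by rewrite mulrC.
Qed.

Lemma mul_kronI_mxvecE d (v : 'cV[R]_d) m p (A : 'M[R]_(m, p)) i a l :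
  (kronI v m *m A) (mxvec_index i a) l = v i 0 * A a l.
Proof.
rewrite mxE; under eq_bigr => k _ do rewrite kronI_mxvecE eq_sym -mulrA.
by rewrite sum_delta.
Qed.

Lemma kronI_mul d (v v' : 'cV[R]_d) n (U : 'M[R]_n) :
  kronI v n *m U *m (kronI v' n)^T = kron (v *m v'^T) U.
Proof.
apply/matrixP => a b; case/mxvec_indexP: a => i a; case/mxvec_indexP: b => j b.
rewrite [LHS]mxE /kron mxE !kidxK /= [in RHS]mxE big_ord1 !mxE.
under eq_bigr => l _ do rewrite mul_kronI_mxvecE mxE kronI_mxvecE mulrCA eq_sym.
by rewrite sum_delta mulrAC.
Qed.

Lemma mulmx_kronI d n k (X : 'M[R]_(n, d * k)) (v : 'cV[R]_d) :
  X *m kronI v k = (kronI v n)^T *m colblocks X.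
Proof.
apply/matrixP => r c; rewrite !mxE !sum_mxvec_index; apply: eq_bigr => i _.
under eq_bigr => a _ do rewrite kronI_mxvecE mulrCA.
under [RHS]eq_bigr => b _ do rewrite !mxE kronI_mxvecE kidxK -mulrA.
by rewrite sum_delta sum_delta mulrC.
Qed.

Definition block_contract d m (Y : 'M[R]_(d * m)) (M : 'M[R]_d) : 'M[R]_m :=
  \matrix_(a, b) \sum_i \sum_j M i j * Y (mxvec_index i a) (mxvec_index j b).

Lemma block_contract_linear d m (Y : 'M[R]_(d * m)) : linear (block_contract Y).
Proof.
move=> c A B; apply/matrixP => a b; rewrite !mxE big_distrr -big_split.
apply: eq_bigr => i _; rewrite big_distrr -big_split; apply: eq_bigr => j _.
by rewrite /= !mxE mulrDl mulrA.
Qed.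

Lemma trmx_kronI_mul d m (v : 'cV[R]_d) (Y : 'M[R]_(d * m)) :
  (kronI v m)^T *m Y *m kronI v m = block_contract Y (v *m v^T).
Proof.
apply/matrixP => a b; rewrite !mxE sum_mxvec_index [RHS]exchange_big /=.
apply: eq_bigr => j _.
under eq_bigr => b' _ do rewrite kronI_mxvecE mulrCA.
rewrite sum_delta mxE sum_mxvec_index mulr_suml; apply: eq_bigr => i _.
under eq_bigr => a' _ do rewrite !mxE kronI_mxvecE -mulrA.
by rewrite sum_delta !mxE big_ord1 !mxE mulrAC.
Qed.

Lemma qform_block_kronI d n k (U : 'M[R]_n) (X : 'M[R]_(n, d * k))
    (Y : 'M[R]_(d * k)) (v : 'cV[R]_d) (u : 'cV[R]_(d * n)) (z : 'cV[R]_k) :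
  let c := col_mx ((kronI v n)^T *m u) (kronI v k *m z) in
  c^T *m block_mx U (- X) (- X^T) Y *m c =
    u^T *m kron (v *m v^T) U *m u
  - u^T *m kron (v *m v^T) 1%:M *m (colblocks X *m z)
  - (colblocks X *m z)^T *m kron (v *m v^T) 1%:M *m u
  + z^T *m block_contract Y (v *m v^T) *m z.
Proof.
have XT : (kronI v k)^T *m X^T = (colblocks X)^T *m kronI v n.
  by rewrite -trmx_mul (mulmx_kronI X) trmx_mul trmxK.
rewrite /= tr_col_mx mul_row_block mul_row_col !trmx_mul trmxK.
rewrite -(kronI_mul v v U) -(kronI_mul v v 1%:M) -trmx_kronI_mul mulmx1.
rewrite !mulmxDl !mulmxN !mulNmx !mulmxA -[_ *m X *m _]mulmxA (mulmx_kronI X).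
rewrite -[z^T *m _ *m X^T]mulmxA XT !mulmxA.
by rewrite addrA; congr (_ + _); rewrite addrAC.
Qed.

End Kronecker.

Lemma qform_addT_sub (R : comPzRingType) k m (B A : 'M[R]_(m, k)) (C : 'M[R]_k)
    (z : 'cV[R]_k) :
  (z^T *m (B^T *m A + A^T *m B - C) *m z) 0 0 =
  ((B *m z)^T *m A *m z) 0 0 *+ 2 - (z^T *m C *m z) 0 0.
Proof.
have -> : z^T *m (B^T *m A + A^T *m B - C) *m z =
    (B *m z)^T *m A *m z + ((B *m z)^T *m A *m z)^T - z^T *m C *m z.
  by rewrite mulmxBr mulmxBl mulmxDr mulmxDl !trmx_mul !trmxK !mulmxA.
set P := (B *m z)^T *m A *m z; set Q := z^T *m C *m z.
by rewrite !mxE mulr2n.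
Qed.

Lemma qform_kron_inv_eq (R : comUnitRingType) d n k (G : 'M[R]_d) (U : 'M[R]_n)
    (Xh : 'M[R]_(d * n, k)) (theta : 'cV[R]_(d * n)) (z : 'cV[R]_k) :
  G \in unitmx -> symmx G -> U \in unitmx -> symmx U ->
  Xh *m z = kron (invmx G) U *m theta ->
  (theta^T *m Xh *m z) 0 0 *+ 2 - (z^T *m (Xh^T *m kron G (invmx U) *m Xh) *m z) 0 0
    = (theta^T *m kron (invmx G) U *m theta) 0 0.
Proof.
move=> uG sG uU sU HXz.
have sFU : (kron (invmx G) U)^T = kron (invmx G) U.
  by rewrite tr_kron trmx_inv sG sU.
have -> : z^T *m (Xh^T *m kron G (invmx U) *m Xh) *m z =
    theta^T *m kron (invmx G) U *m theta.
  rewrite !mulmxA -trmx_mul -!mulmxA HXz trmx_mul sFU !mulmxA.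
  by rewrite -[_ *m kron G _]mulmxA kron_mul mulVmx // mulmxV // kron1mx mulmx1.
by rewrite -mulmxA HXz mulmxA mulr2n addrK.
Qed.

Section LinearCombinators.
Variables (R : comPzRingType) (U : lmodType R).

Lemma linear_add_fun (V : lmodType R) (G H : U -> V) :
  linear G -> linear H -> linear (G \+ H).
Proof. by move=> hG hH a x y /=; rewrite hG hH scalerDr addrACA. Qed.

Lemma linear_sub_fun (V : lmodType R) (G H : U -> V) :
  linear G -> linear H -> linear (G \- H).
Proof. by move=> hG hH a x y /=; rewrite hG hH scalerBr opprD addrACA. Qed.

Lemma linear_mulmx_fun m n p q (P : 'M[R]_(m, n)) (Q : 'M[R]_(p, q))
    (G : U -> 'M[R]_(n, p)) :
  linear G -> linear (fun x => P *m G x *m Q).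
Proof. by move=> hG a x y; rewrite hG mulmxDr mulmxDl -scalemxAr -scalemxAl. Qed.

End LinearCombinators.

Section SchurComplement.
Variable R : numFieldType.

Lemma posdef_unitmx m (M : 'M[R]_m) : posdef M -> M \in unitmx.
Proof.
move=> [_ H]; rewrite unitmxE unitfE; apply/negP => /det0P [v nz Hv].
have nzT : v^T != 0 by rewrite trmx_eq0.
by have := H _ nzT; rewrite trmxK Hv mul0mx mxE ltxx.
Qed.

Lemma posdef_qform_ge0 m (M : 'M[R]_m) (v : 'cV[R]_m) :
  posdef M -> 0 <= (v^T *m M *m v) 0 0.
Proof.
move=> [_ H]; have [->|nz] := eqVneq v 0; last exact/ltW/H.
by rewrite mulmx0 mxE.
Qed.

Lemma symmx_invmx m (M : 'M[R]_m) : symmx M -> symmx (invmx M).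
Proof. by rewrite /symmx trmx_inv => ->. Qed.

Lemma psd_schur_block n k (U : 'M[R]_n) (X : 'M[R]_(n, k)) :
  posdef U -> psd (block_mx U (- X) (- X^T) (X^T *m invmx U *m X)).
Proof.
move=> pU; have uU := posdef_unitmx pU; have sU : symmx U by case: pU.
have sUi := symmx_invmx sU.
split.
  rewrite /symmx tr_block_mx !linearN /= trmxK sU !trmx_mul trmxK sUi.
  by rewrite mulmxA.
move=> v; rewrite -[v]vsubmxK; move: (usubmx v) (dsubmx v) => a b.
set c := U *m a - X *m b.
have -> : (col_mx a b)^T *m block_mx U (- X) (- X^T) (X^T *m invmx U *m X)
            *m col_mx a b = (invmx U *m c)^T *m U *m (invmx U *m c).
  rewrite tr_col_mx mul_row_block mul_row_col trmx_mul sUi /c.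
  rewrite -mulmxA mulmxA mulmxKV //.
  rewrite linearB /= !trmx_mul sU !mulmxBl !mulmxBr !mulmxDl !mulmxN !mulNmx.
  rewrite !mulmxA -[a^T *m U *m invmx U]mulmxA mulmxV // mulmx1.
  rewrite -[b^T *m X^T *m invmx U *m U]mulmxA mulVmx // mulmx1 opprB addrACA.
  by congr (_ + _); rewrite addrC.
exact: posdef_qform_ge0.
Qed.

End SchurComplement.

Lemma normM_le_dotmul (R : realDomainType) d (v : 'cV[R]_d) i j :
  `|v i 0 * v j 0| <= (v^T *m v) 0 0.
Proof.
have sq_le k : `|v k 0| ^+ 2 <= (v^T *m v) 0 0.
  rewrite real_normK ?num_real // mxE (bigD1 k) //= mxE -expr2 lerDl.
  by apply: sumr_ge0 => l _; rewrite mxE -expr2 sqr_ge0.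
rewrite normrM; have [le|lt] := lerP `|v i 0| `|v j 0|.
  by apply: le_trans (sq_le j); rewrite expr2 ler_wpM2r.
by apply: le_trans (sq_le i); rewrite expr2 ler_wpM2l // ltW.
Qed.

Section MatrixIntegral.
Variables (R : realType) (K : set R).
Hypothesis mK : measurable K.
Local Notation mu := (@lebesgue_measure R).

Lemma Rintegral_sum I (r : seq I) (g : I -> R -> R) :
  (forall i, mu.-integrable K (EFin \o g i)) ->
  Rintegral mu K (fun t => \sum_(i <- r) g i t) =
  \sum_(i <- r) Rintegral mu K (g i).
Proof.
move=> ig; elim: r => [|i r IH].
  under eq_Rintegral do rewrite big_nil.
  by rewrite big_nil Rintegral_cst // mul0r.
under eq_Rintegral do rewrite big_cons.
rewrite big_cons RintegralD // ?IH //.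
have -> : EFin \o (fun t => \sum_(j <- r) g j t) =
          (fun t => \sum_(j <- r) (EFin \o g j) t).
  by apply: funext => t /=; rewrite sumEFin.
exact: integrable_sum.
Qed.

Lemma mxint_linear m p m' p' (G : R -> 'M[R]_(m, p))
    (Phi : 'M[R]_(m, p) -> 'M[R]_(m', p')) :
  (forall i j, mu.-integrable K (EFin \o fun t => G t i j)) -> linear Phi ->
  mxint K (fun t => Phi (G t)) = Phi (mxint K G).
Proof.
move=> iG linPhi.
have Phi_delta M : Phi M = \sum_(x : 'I_m * 'I_p) M x.1 x.2 *: Phi (delta_mx x.1 x.2).
  have [Phi_scale Phi_add] := GRing.semilinear_linear linPhi.
  have Phi0 : Phi 0 = 0 by rewrite -(subrr 0) (GRing.zmod_morphism_linear linPhi) subrr.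
  rewrite {1}(matrix_sum_delta M) pair_big /= (big_morph Phi Phi_add Phi0).
  by apply: eq_bigr => x _; rewrite Phi_scale.
apply/matrixP => a b; rewrite mxE [in RHS]Phi_delta summxE.
under eq_Rintegral do rewrite Phi_delta summxE.
rewrite Rintegral_sum; last first.
  move=> x; under eq_fun do rewrite mxE.
  have -> : EFin \o (fun t => G t x.1 x.2 * Phi (delta_mx x.1 x.2) a b) =
      ((EFin \o fun t => G t x.1 x.2) \* cst (Phi (delta_mx x.1 x.2) a b)%:E)%E.
    by apply: funext => t /=; rewrite EFinM.
  exact: integrableZr.
apply: eq_bigr => x _; rewrite [RHS]mxE /mxint mxE -RintegralZr //.
by apply: eq_Rintegral => t _; rewrite mxE.
Qed.

End MatrixIntegral.

Section GramIntegrals.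
Variables (R : realType) (K : set R) (w : R -> R) (d : nat) (f : R -> 'cV[R]_d).
Hypotheses (mK : measurable K) (mw : measurable_fun K w)
  (w_ge0 : forall t, K t -> 0 <= w t) (L2f : L2w K w f).
Local Notation mu := (@lebesgue_measure R).
Local Notation gram := (mxint K (fun t => w t *: (f t *m (f t)^T))).

Lemma integrable_wffT i j :
  mu.-integrable K (EFin \o fun t => (w t *: (f t *m (f t)^T)) i j).
Proof.
have [mf intf] := L2f.
under eq_fun do rewrite !mxE big_ord1 !mxE.
apply: (le_integrable _ _ _ intf) => //.
  apply/measurable_EFinP; apply: measurable_funM => //.
  exact: measurable_funM (mf i) (mf j).
move=> t Kt; rewrite lee_fin normrM (ger0_norm (w_ge0 Kt)).
have fTf_ge0 := le_trans (normr_ge0 _) (normM_le_dotmul (f t) i j).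
rewrite [X in _ <= X]ger0_norm ?mulr_ge0 ?w_ge0 //.
by apply: ler_wpM2l; [exact: w_ge0 | exact: normM_le_dotmul].
Qed.

Lemma mxint_wffT_linear p q (Phi : 'M[R]_d -> 'M[R]_(p, q)) :
  linear Phi -> mxint K (fun t => Phi (w t *: (f t *m (f t)^T))) = Phi gram.
Proof. exact/mxint_linear/integrable_wffT. Qed.

Lemma mxint_block_contract m (Y : 'M[R]_(d * m)) :
  mxint K (fun t => w t *: ((kronI (f t) m)^T *m Y *m kronI (f t) m)) =
  block_contract Y gram.
Proof.
rewrite -mxint_wffT_linear; last exact: block_contract_linear.
congr mxint; apply: funext => t.
by rewrite (GRing.scalable_linear (block_contract_linear Y)) trmx_kronI_mul.
Qed.

Lemma mxint_kronI_congr n k (X : 'M[R]_(n, d * k)) (P : 'M[R]_n) :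
  mxint K (fun t => w t *: ((kronI (f t) k)^T *m (X^T *m P *m X) *m kronI (f t) k)) =
  (colblocks X)^T *m kron gram P *m colblocks X.
Proof.
have linP := linear_mulmx_fun (colblocks X)^T (colblocks X) (kron_linearl P).
rewrite -(mxint_wffT_linear linP); congr mxint; apply: funext => t.
rewrite (GRing.scalable_linear (kron_linearl P)) -scalemxAr -scalemxAl.
rewrite -kronI_mul !mulmxA -[_ *m X^T]trmx_mul (mulmx_kronI X) trmx_mul trmxK.
by rewrite -!mulmxA (mulmx_kronI X).
Qed.

Lemma qform_gram_schur_ge0 n k (U : 'M[R]_n) (X : 'M[R]_(n, d * k))
    (Y : 'M[R]_(d * k)) (u : 'cV[R]_(d * n)) (z : 'cV[R]_k) :
  psd (block_mx U (- X) (- X^T) Y) ->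
  0 <= (u^T *m kron gram U *m u
      - u^T *m kron gram 1%:M *m (colblocks X *m z)
      - (colblocks X *m z)^T *m kron gram 1%:M *m u
      + z^T *m block_contract Y gram *m z) 0 0.
Proof.
move=> [_ psdB].
pose Phi M := u^T *m kron M U *m u
  - u^T *m kron M 1%:M *m (colblocks X *m z)
  - (colblocks X *m z)^T *m kron M 1%:M *m u
  + z^T *m block_contract Y M *m z.
have linPhi : linear Phi.
  apply: linear_add_fun; last exact/linear_mulmx_fun/block_contract_linear.
  by do 2?apply: linear_sub_fun; exact/linear_mulmx_fun/kron_linearl.
change (0 <= (Phi gram) 0 0); rewrite -(mxint_wffT_linear linPhi) /mxint mxE.
apply: Rintegral_ge0 => t Kt.
rewrite (GRing.scalable_linear linPhi) mxE /Phi -qform_block_kronI.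
by rewrite mulr_ge0 ?w_ge0 ?psdB.
Qed.

Lemma gram_schur_bound n k (U : 'M[R]_n) (X : 'M[R]_(n, d * k))
    (Y : 'M[R]_(d * k)) (theta : 'cV[R]_(d * n)) (z : 'cV[R]_k) :
  posdef gram -> psd (block_mx U (- X) (- X^T) Y) ->
  (theta^T *m colblocks X *m z) 0 0 *+ 2 - (z^T *m block_contract Y gram *m z) 0 0
    <= (theta^T *m kron (invmx gram) U *m theta) 0 0.
Proof.
move=> pG psdB; have := qform_gram_schur_ge0 (kron (invmx gram) 1%:M *m theta) z psdB.
have uG := posdef_unitmx pG.
have sGi : symmx (invmx gram) by apply: symmx_invmx; case: pG.
set G := gram; set Xz := colblocks X *m z.
have -> : (kron (invmx G) 1%:M *m theta)^T = theta^T *m kron (invmx G) 1%:M.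
  by rewrite trmx_mul tr_kron sGi trmx1.
have thetaK : theta^T *m kron (invmx G) 1%:M *m kron G 1%:M = theta^T.
  by rewrite -mulmxA kron_mul mulVmx // mulmx1 kron1mx mulmx1.
have -> : theta^T *m kron (invmx G) 1%:M *m kron G U *m (kron (invmx G) 1%:M *m theta)
    = theta^T *m kron (invmx G) U *m theta.
  rewrite -[_ *m kron G U]mulmxA kron_mul mulVmx // mul1mx mulmxA.
  by rewrite -[_ *m kron (invmx G) _]mulmxA kron_mul mul1mx mulmx1.
have -> : Xz^T *m kron G 1%:M *m (kron (invmx G) 1%:M *m theta) = Xz^T *m theta.
  rewrite mulmxA -[_ *m kron (invmx G) _]mulmxA kron_mul mulmxV //.
  by rewrite mulmx1 kron1mx mulmx1.
have -> : (Xz^T *m theta) = (theta^T *m Xz)^T by rewrite [RHS]trmx_mul trmxK.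
rewrite thetaK -[theta^T *m colblocks X *m z]mulmxA -/Xz.
set a := theta^T *m _ *m theta; set b := theta^T *m Xz; set c := z^T *m _ *m z.
by rewrite !mxE mulr2n; lra.
Qed.

End GramIntegrals.

Theorem theorem3 (R : realType) (K : set R) (w : R -> R) (d n rho : nat)
  (f : R -> 'cV[R]_d) (U : 'M[R]_n) (x : R -> 'cV[R]_n)
  (Ups : 'M[R]_(d * n, rho * n)) (z : 'cV[R]_(rho * n)) :
  measurable K ->
  (0 < lebesgue_measure K)%E ->
  measurable_fun K w ->
  lebesgue_measure.-integrable K (fun t => (w t)%:E) ->
  (forall t, K t -> 0 <= w t) ->
  countable [set t | K t /\ w t = 0] ->
  L2w K w f ->
  posdef (mxint K (fun t => w t *: (f t *m (f t)^T))) ->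
  posdef U ->
  L2w K w x ->
  let Finv := mxint K (fun t => w t *: (f t *m (f t)^T)) in
  let F := invmx Finv in
  let theta := mxint K (fun t => w t *: (kronI (f t) n *m x t)) in
  Ups *m z = theta ->
  let W (Y : 'M[R]_(d * (rho * n))) :=
    mxint K (fun t => w t *: ((kronI (f t) (rho * n))^T *m Y
                               *m kronI (f t) (rho * n))) in
  let lhs (X : 'M[R]_(n, d * (rho * n))) Y :=
    (z^T *m (Ups^T *m colblocks X + (colblocks X)^T *m Ups - W Y) *m z) 0 0 in
  let rhs := (theta^T *m kron F U *m theta) 0 0 in
  (forall (X : 'M[R]_(n, d * (rho * n))) (Y : 'M[R]_(d * (rho * n))),
     symmx Y ->
     psd (block_mx U (- X) (- X^T) Y) ->
     lhs X Y <= rhs) /\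
  (forall X : 'M[R]_(n, d * (rho * n)),
     colblocks X = kron F U *m Ups ->
     let Y := X^T *m invmx U *m X in
     psd (block_mx U (- X) (- X^T) Y) /\ lhs X Y = rhs).
Proof.
move=> mK _ mw _ w_ge0 _ L2f pG pU _ Finv F theta Hz W lhs rhs.
split=> [X Y _ psdB | X HX Y].
  rewrite /lhs qform_addT_sub Hz /W mxint_block_contract //.
  exact: gram_schur_bound.
split; first exact: psd_schur_block.
rewrite /lhs qform_addT_sub Hz /W /Y mxint_kronI_congr //.
apply: qform_kron_inv_eq.
- exact: posdef_unitmx.
- by case: pG.
- exact: posdef_unitmx.
- by case: pU.
- by rewrite HX -mulmxA Hz.
Qed.
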